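(* Let $\mathcal N_1$ be the network with nodes $\sigma_1,\sigma_2,v,\rho$, source set $S=\{\sigma_1,\sigma_2\}$, sink $\rho$, and five edges: two parallel edges from $\sigma_1$ to $v$, one edge from $\sigma_2$ to $v$, one edge from $\sigma_2$ to $\rho$, and one edge from $v$ to $\rho$. Let $f(m_1,m_2)=m_1+m_2$ over $\mathbb F_2$. Then $\widehat{\mathcal C}(\mathcal N_1,f,1)=1=\min_{i}\mathrm{mincut}(\sigma_i,\rho)$; in particular there is an admissible $(1,1)$ secure network code for $(\mathcal N_1,f,1)$.
   Context: $\mathrm{mincut}(u,v)$ is the minimum size of an edge set whose deletion leaves no path from node $u$ to node $v$. For a nonnegative integer $r$, $\mathcal W_r=\{W\subseteq\mathcal E:|W|\le r\}$. Secure model for a network $\mathcal N=(\mathcal G,S,\rho)$ ($\mathcal G=(\mathcal V,\mathcal E)$ directed acyclic, sources without input edges, sink without output edges), $q$ a prime power, $f=\sum_i m_i$ over $\mathbb F_q$, each edge carrying one symbol of $\mathbb F_q$ per use: an $(\ell,n)$ secure network code has source messages $\mathbf M_i\in\mathbb F_q^\ell$ (i.i.d. uniform entries) and keys $\mathbf K_i$ uniform on finite sets $\mathcal K_i$, all mutually independent; each edge out of $\sigma_i$ carries a function of $(\mathbf M_i,\mathbf K_i)$ in $\mathbb F_q^n$, every other edge carries a function in $\mathbb F_q^n$ of the messages on the input edges of its tail; a decoder at $\rho$ maps the incoming messages to $\mathbb F_q^\ell$. Admissible (for security level $r$): decoder outputs $\sum_i\mathbf m_i$ for all messages and keys, and $I(\mathbf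 Y_W;\mathbf M_S)=0$ for all $W\in\mathcal W_r$ ($\mathbf Y_W$ the messages on edges of $W$, $\mathbf M_S=(\mathbf M_1,\dots,\mathbf M_s)$). Rate $\ell/n$; $R$ achievable if for all $\epsilon>0$ some admissible code has rate $>R-\epsilon$; $\widehat{\mathcal C}(\mathcal N,f,r)$ is the maximum achievable rate. *)

From Stdlib Require Import Rdefinitions Rpower.
From HB Require Import structures.
From mathcomp Require Import all_boot all_order all_algebra.
From mathcomp Require Import Rstruct.
Set Implicit Arguments. Unset Strict Implicit. Unset Printing Implicit Defensive.
Import Order.TTheory GRing.Theory Num.Theory.
Local Open Scope ring_scope.

Definition avoid_rel (N E : finType) (tl hd : E -> N) (A : {set E}) : rel N :=
  fun x y => [exists e, [&& e \notin A, tl e == x & hd e == y]].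

Definition reach_avoid (N E : finType) (tl hd : E -> N) (A : {set E}) (u v : N) :=
  connect (avoid_rel tl hd A) u v.

(* mincut(u,v): minimum size of an edge set whose deletion leaves no path
   from u to v (the default #|E| is never the unique candidate issue when
   u <> v, since deleting all edges disconnects u from v). *)
Definition mincut (N E : finType) (tl hd : E -> N) (u v : N) : nat :=
  \big[minn/#|E|]_(A : {set E} | ~~ reach_avoid tl hd A u v) #|A|.

Definition N1node := 'I_4.
Definition sigma1 : N1node := @Ordinal 4 0 isT.
Definition sigma2 : N1node := @Ordinal 4 1 isT.
Definition vnode  : N1node := @Ordinal 4 2 isT.
Definition rho    : N1node := @Ordinal 4 3 isT.

(* edges e1,e2 : sigma1 -> v ; e3 : sigma2 -> v ; e4 : sigma2 -> rho ;
   e5 : v -> rho *)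
Definition N1edge := 'I_5.
Definition N1tail (e : N1edge) : N1node :=
  nth rho [:: sigma1; sigma1; sigma2; sigma2; vnode] e.
Definition N1head (e : N1edge) : N1node :=
  nth rho [:: vnode; vnode; vnode; rho; rho] e.

Definition uprob (O : finType) (P : pred O) : R :=
  #|[set w | P w]|%:R / #|O|%:R.

Definition mutual_info (O A B : finType) (X : O -> A) (Y : O -> B) : R :=
  \sum_(a : A) \sum_(b : B)
    let pab := uprob (fun w => (X w == a) && (Y w == b)) in
    let pa := uprob (fun w => X w == a) in
    let pb := uprob (fun w => Y w == b) in
    if pab == 0 then 0 else pab * ln (pab / (pa * pb)).

Definition F := 'F_2.

(* The local encoding functions follow the topology of N1:
   edges out of sigma1 (e1,e2) are functions of (M1,K1), edges out of
   sigma2 (e3,e4) are functions of (M2,K2), edge e5 out of v is a function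
   of the messages on the input edges e1,e2,e3 of v, and the decoder at rho
   is a function of the messages on its input edges e4,e5. *)
Record N1code (l n : nat) (K1 K2 : finType) := N1Code {
  enc1 : 'rV[F]_l -> K1 -> 'rV[F]_n;
  enc2 : 'rV[F]_l -> K1 -> 'rV[F]_n;
  enc3 : 'rV[F]_l -> K2 -> 'rV[F]_n;
  enc4 : 'rV[F]_l -> K2 -> 'rV[F]_n;
  enc5 : 'rV[F]_n -> 'rV[F]_n -> 'rV[F]_n -> 'rV[F]_n;
  dec  : 'rV[F]_n -> 'rV[F]_n -> 'rV[F]_l }.

(* sample space: (M1, M2, K1, K2), all uniform and independent,
   i.e. the uniform distribution on the product *)
Definition omega (l : nat) (K1 K2 : finType) :=
  ('rV[F]_l * 'rV[F]_l * K1 * K2)%type.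

Definition edge_msg l n K1 K2 (C : N1code l n K1 K2)
    (w : omega l K1 K2) (e : N1edge) : 'rV[F]_n :=
  let: (m1, m2, k1, k2) := w in
  let y1 := enc1 C m1 k1 in
  let y2 := enc2 C m1 k1 in
  let y3 := enc3 C m2 k2 in
  let y4 := enc4 C m2 k2 in
  let y5 := enc5 C y1 y2 y3 in
  nth 0 [:: y1; y2; y3; y4; y5] e.

Definition Y_W l n K1 K2 (C : N1code l n K1 K2) (W : {set N1edge})
    (w : omega l K1 K2) : {ffun N1edge -> 'rV[F]_n} :=
  [ffun e => if e \in W then edge_msg C w e else 0].

Definition M_S l K1 K2 (w : omega l K1 K2) : 'rV[F]_l * 'rV[F]_l :=
  let: (m1, m2, _, _) := w in (m1, m2).

Definition admissible l n K1 K2 (r : nat) (C : N1code l n K1 K2) : Prop :=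
  (forall m1 m2 k1 k2,
      dec C (edge_msg C (m1, m2, k1, k2) (@Ordinal 5 3 isT))
            (edge_msg C (m1, m2, k1, k2) (@Ordinal 5 4 isT)) = m1 + m2)
  /\ (forall W : {set N1edge}, (#|W| <= r)%N ->
        mutual_info (Y_W C W) (@M_S l K1 K2) = 0).

Definition exists_admissible_code (l n r : nat) : Prop :=
  exists (K1 K2 : finType), (0 < #|K1|)%N /\ (0 < #|K2|)%N /\
    exists C : N1code l n K1 K2, admissible r C.

Definition achievable (r : nat) (Rt : R) : Prop :=
  forall eps : R, 0 < eps ->
    exists l n : nat, (0 < n)%N /\ exists_admissible_code l n r /\
      Rt - eps < l%:R / n%:R.

Definition is_secure_capacity (r : nat) (Cap : R) : Prop :=
  achievable r Cap /\ forall Rt, achievable r Rt -> Rt <= Cap.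

(* Achievability is a one-time pad: sigma1 sends k1 and m1 + k1 to v, sigma2 sends
   m2 + k2 to v and k2 to rho, v forwards m1 + m2 + k2 and rho subtracts k2.  Each
   single edge carries either a key or a message shifted by an independent uniform
   key, so changing the messages amounts to a bijective change of keys, and the edge
   is independent of the messages.  Conversely, with m2 and the keys fixed, m1 is
   recovered from the edge v -> rho alone, so 2^l <= 2^n.  For the min-cut, deleting
   v -> rho separates sigma1 from rho while both sources reach rho. *)

From Stdlib Require Import Rdefinitions Rpower RIneq.
From HB Require Import structures.
From mathcomp Require Import all_boot all_order all_algebra.
From mathcomp Require Import Rstruct ring lra.
Set Implicit Arguments. Unset Strict Implicit. Unset Printing Implicit Defensive.
Import Order.TTheory GRing.Theory Num.Theory.

(* Lets [big_rem_AC] pick a candidate cut out of the [\big[minn/_]] defining [mincut]. *)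
HB.instance Definition _ := SemiGroup.isComLaw.Build nat minn minnA minnC.

Lemma connect_forward_closed (T : finType) (e : rel T) (S : pred T) :
  (forall x y, S x -> e x y -> S y) -> forall x y, connect e x y -> S x -> S y.
Proof.
move=> Sclosed x y /connectP [p + ->]; elim: p x => //= z p IHp x.
by case/andP=> exz /IHp IH Sx; apply/IH/(Sclosed x).
Qed.

Section MinCut.

Variables (N E : finType) (tl hd : E -> N).

Lemma mincut_le_card (u v : N) (A : {set E}) :
  ~~ reach_avoid tl hd A u v -> (mincut tl hd u v <= #|A|)%N.
Proof.
by move=> cutA; rewrite /mincut (big_rem_AC minn _ _ _ (mem_index_enum A)) cutA geq_minl.
Qed.

Lemma mincut_gt0 (u v : N) :
  u != v -> reach_avoid tl hd set0 u v -> (0 < mincut tl hd u v)%N.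
Proof.
move=> neq_uv reach_uv.
have cutT : ~~ reach_avoid tl hd setT u v.
  apply: contra neq_uv => /connectP [[|z p] /=]; first by move=> _ ->.
  by case/andP=> /existsP [e]; rewrite inE.
rewrite /mincut; elim/big_ind: _ => [|m n|A cutA].
- by rewrite -cardsT card_gt0; apply: contraNneq cutT => ->.
- by rewrite leq_min => -> ->.
- by rewrite card_gt0; apply: contraNneq cutA => ->.
Qed.

Lemma avoid_rel_edge (A : {set E}) (e : E) :
  e \notin A -> avoid_rel tl hd A (tl e) (hd e).
Proof. by move=> eA; apply/existsP; exists e; rewrite eA !eqxx. Qed.

End MinCut.

Definition e5 : N1edge := @Ordinal 5 4 isT.

Lemma N1_cut_e5_closed x y : x \in [set sigma1; vnode] ->
  avoid_rel N1tail N1head [set e5] x y -> y \in [set sigma1; vnode].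
Proof.
rewrite !inE => Sx /existsP [[[|[|[|[|[|//]]]]] ?]];
  rewrite !inE => /and3P [//= _ /eqP tl_x /eqP <-]; by rewrite -tl_x in Sx.
Qed.

Lemma N1_cut_e5 : ~~ reach_avoid N1tail N1head [set e5] sigma1 rho.
Proof.
apply/negP => /(connect_forward_closed N1_cut_e5_closed).
by rewrite !inE eqxx => /(_ isT).
Qed.

Lemma N1_min_mincut :
  minn (mincut N1tail N1head sigma1 rho) (mincut N1tail N1head sigma2 rho) = 1%N.
Proof.
have edge e : avoid_rel N1tail N1head set0 (N1tail e) (N1head e).
  by apply: avoid_rel_edge; rewrite inE.
have reach1 : reach_avoid N1tail N1head set0 sigma1 rho.
  exact: connect_trans (connect1 (edge ord0)) (connect1 (edge e5)).
have reach2 : reach_avoid N1tail N1head set0 sigma2 rho.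
  exact: connect1 (edge (@Ordinal 5 3 isT)).
apply/eqP; rewrite eqn_leq leq_min !mincut_gt0 // geq_min.
by have := mincut_le_card N1_cut_e5; rewrite cards1 => ->.
Qed.

Local Open Scope ring_scope.

(* The numeral [1] of the capacity statement elaborates to Stdlib's [IZR 1]. *)
Lemma IZR1E : IZR 1 = 1 :> R.
Proof. by []. Qed.

Lemma RdivE (x y : R) : Rdefinitions.Rdiv x y = x / y.
Proof. by []. Qed.

Lemma mutual_info_indep (O A B : finType) (X : O -> A) (Y : O -> B) :
  (forall a b, uprob (fun w => (X w == a) && (Y w == b)) =
               uprob (fun w => X w == a) * uprob (fun w => Y w == b)) ->
  mutual_info X Y = 0.
Proof.
move=> indep; rewrite /mutual_info big1 // => a _; rewrite big1 // => b _ /=.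
by rewrite indep; case: eqP => // pab_neq0; rewrite Rdiv_diag // ln_1 mulr0.
Qed.

Lemma uprob_indep (O : finType) (P Q : pred O) :
  (#|[set w | P w && Q w]| * #|O| = #|[set w | P w]| * #|[set w | Q w]|)%N ->
  uprob (fun w => P w && Q w) = uprob P * uprob Q.
Proof.
move=> count_indep; rewrite /uprob !RdivE; have [->|O_gt0] := posnP #|O|.
  by rewrite invr0 !mulr0.
have O_neq0 : (#|O|%:R : R) != 0 by rewrite pnatr_eq0 -lt0n.
rewrite -(mulfK O_neq0 #|_|%:R) -natrM count_indep natrM.
by ring.
Qed.

Section KeyMasking.

Variables (l : nat) (K1 K2 : finType).

Local Notation message := ('rV[F]_l * 'rV[F]_l)%type.
Local Notation key := (K1 * K2)%type.

Definition outcome (m : message) (k : key) : omega l K1 K2 := (m.1, m.2, k.1, k.2).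

Definition keys_mask (A : finType) (X : omega l K1 K2 -> A) :=
  forall m : message, exists2 g : key -> key, injective g &
    forall k, X (outcome m k) = X (outcome 0 (g k)).

Lemma card_omega (P : pred (omega l K1 K2)) :
  #|[set w | P w]| = (\sum_(m : message) #|[set k | P (outcome m k)]|)%N.
Proof.
under eq_bigr do rewrite -sum1dep_card.
rewrite -sum1dep_card pair_big_dep.
rewrite (reindex (fun p : message * key => outcome p.1 p.2)) //=.
apply: onW_bij; exists (fun w => ((w.1.1.1, w.1.1.2), (w.1.2, w.2))).
  by case=> [[? ?] [? ?]].
by case=> [[[? ?] ?] ?].
Qed.

Lemma card_omega_message (P : pred (omega l K1 K2)) (b : message) :
  #|[set w | P w && (M_S w == b)]| = #|[set k | P (outcome b k)]|.
Proof.
rewrite card_omega (bigD1 b) //= big1 => [|m /negbTE neq_mb].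
  by rewrite addn0; apply: eq_card => k; rewrite !inE -surjective_pairing eqxx andbT.
by apply: eq_card0 => k; rewrite !inE -surjective_pairing neq_mb andbF.
Qed.

Lemma keys_mask_card (A : finType) (X : omega l K1 K2 -> A) a m :
  keys_mask X -> #|[set k | X (outcome m k) == a]| = #|[set k | X (outcome 0 k) == a]|.
Proof.
case/(_ m) => g inj_g mask_m; rewrite -[RHS](card_preimset _ inj_g).
by apply: eq_card => k; rewrite !inE mask_m.
Qed.

Lemma mutual_info_keys_mask (A : finType) (X : omega l K1 K2 -> A) :
  keys_mask X -> mutual_info X (@M_S l K1 K2) = 0.
Proof.
move=> mask; apply: mutual_info_indep => a b; apply: uprob_indep.
have joint := card_omega_message (fun w => X w == a) b.
have marginal_M_S : #|[set w : omega l K1 K2 | M_S w == b]| = #|[set: key]|.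
  rewrite (@eq_card _ _ [set w | predT w && (M_S w == b)]) => [|w];
    last by rewrite !inE.
  by rewrite card_omega_message; apply: eq_card => k; rewrite !inE.
have marginal_X : #|[set w | X w == a]| =
    (#|{: message}| * #|[set k | X (outcome 0%R k) == a]|)%N.
  by rewrite card_omega -sum_nat_const; apply: eq_bigr => m _; apply: keys_mask_card.
rewrite joint (keys_mask_card _ _ mask) marginal_X marginal_M_S.
by rewrite cardsT mulnAC mulnC !card_prod !mulnA.
Qed.

Lemma keys_mask_Y_W n (C : N1code l n K1 K2) (W : {set N1edge}) (e : N1edge) :
  W \subset [set e] -> keys_mask (fun w => edge_msg C w e) -> keys_mask (Y_W C W).
Proof.
move=> /subsetP sub_We mask m; have [g inj_g mask_m] := mask m.
exists g => // k; apply/ffunP => x; rewrite !ffunE.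
by case: ifP => // /sub_We; rewrite inE => /eqP ->.
Qed.

End KeyMasking.

Definition pad_code l : N1code l l 'rV[F]_l 'rV[F]_l :=
  N1Code (fun m k => k) (fun m k => m + k) (fun m k => m + k) (fun m k => k)
    (fun y1 y2 y3 => y2 - y1 + y3) (fun y4 y5 => y5 - y4).

Lemma pad_code_edge_mask l (e : N1edge) :
  keys_mask (fun w => edge_msg (pad_code l) w e).
Proof.
pose shift (d k : 'rV[F]_l * 'rV[F]_l) := (k.1 + d.1, k.2 + d.2).
have inj_shift d : injective (shift d) by move=> [? ?] [? ?] [/addIr -> /addIr ->].
move=> m; suff [d mask_d] : exists d, forall k,
    edge_msg (pad_code l) (outcome m k) e = edge_msg (pad_code l) (outcome 0 (shift d k)) e.
  by exists (shift d).
rewrite /outcome; case: m => m1 m2; case: e => -[|[|[|[|[|//]]]]] _ /=.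
- by exists 0 => -[k1 k2] /=; rewrite addr0.
- by exists (m1, 0) => -[k1 k2] /=; rewrite add0r addrC.
- by exists (0, m2) => -[k1 k2] /=; rewrite add0r addrC.
- by exists 0 => -[k1 k2] /=; rewrite addr0.
- by exists (0, m1 + m2) => -[k1 k2] /=; rewrite !add0r subrr add0r addrK addrA addrC.
Qed.

Lemma pad_code_admissible l : admissible 1 (pad_code l).
Proof.
split=> [m1 m2 k1 k2 /=|W]; first by rewrite addrK addrA addrK.
rewrite leq_eqVlt ltnS leqn0 => card_W.
have [e sub_We] : exists e, W \subset [set e].
  case/orP: card_W => [/cards1P [e ->]|/eqP/cards0_eq ->]; first by exists e.
  by exists ord0; rewrite sub0set.
exact/mutual_info_keys_mask/(keys_mask_Y_W sub_We)/pad_code_edge_mask.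
Qed.

Lemma pad_code_exists l : exists_admissible_code l l 1.
Proof.
have rV_gt0 : (0 < #|{: 'rV[F]_l}|)%N by apply/card_gt0P; exists 0.
exists 'rV[F]_l, 'rV[F]_l; do 2!split=> //.
by exists (pad_code l); apply: pad_code_admissible.
Qed.

Lemma exists_admissible_code_leq l n r : exists_admissible_code l n r -> (l <= n)%N.
Proof.
case=> K1 [K2 [/card_gt0P [k1 _] [/card_gt0P [k2 _] [C [dec_ok _]]]]].
(* The edge sigma2 -> rho does not see m1, so the edge v -> rho must determine it. *)
pose y5 (m : 'rV[F]_l) := edge_msg C (m, 0, k1, k2) (@Ordinal 5 4 isT).
have inj_y5 : injective y5.
  move=> m m' eq_y5.
  rewrite -[m]addr0 -[m']addr0 -(dec_ok m 0 k1 k2) -(dec_ok m' 0 k1 k2).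
  by congr (dec C _ _); apply: eq_y5.
by have := leq_card y5 inj_y5; rewrite !card_mx card_Fp // !mul1n leq_exp2l.
Qed.

Lemma secure_capacity_one r : exists_admissible_code 1 1 r -> is_secure_capacity r 1.
Proof.
move=> code11; rewrite /is_secure_capacity IZR1E; split=> [eps eps_gt0|Rt achieve_Rt].
  by exists 1%N, 1%N; do 2!split=> //; rewrite divr1; lra.
rewrite leNgt; apply/negP => gt1_Rt.
move: (achieve_Rt (Rt - 1)); rewrite subr_gt0 => /(_ gt1_Rt).
case=> l [n [n_gt0 [/exists_admissible_code_leq le_ln]]].
have : l%:R / n%:R <= 1 :> R by rewrite ler_pdivrMr ?mul1r ?ler_nat ?ltr0n.
lra.
Qed.

Theorem mainTheorem5 :
  is_secure_capacity 1 1
  /\ minn (mincut N1tail N1head sigma1 rho) (mincut N1tail N1head sigma2 rho) = 1%N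
  /\ exists_admissible_code 1 1 1.
Proof.
split; first exact/secure_capacity_one/pad_code_exists.
by split; [exact: N1_min_mincut | exact: pad_code_exists].
Qed.
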